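(* For fixed nonnegative integers $r,s$, the quantity $$\frac{1}{n!}\sum_{\pi\in S_n}\mathrm{inv}(\pi)^r\,\mathrm{maj}(\pi)^s$$ is, for $n\ge1$, given by a polynomial in $n$ (with rational coefficients). Likewise, for fixed $r,s$, the factorial moment $FM(r,s)(n,i)$ defined below is given by a polynomial in $(n,i)$ for all $1\le i\le n$.
   Context: For a permutation $\pi=\pi_1\cdots\pi_n$ of $\{1,\dots,n\}$: $\mathrm{inv}(\pi)$ is the number of pairs $1\le i<j\le n$ with $\pi_i>\pi_j$, and $\mathrm{maj}(\pi)$ is the sum of all positions $i\in\{1,\dots,n-1\}$ with $\pi_i>\pi_{i+1}$. Let $z^{(k)}=z(z-1)\cdots(z-k+1)$ denote the falling factorial ($z^{(0)}=1$). For $1\le i\le n$ let $\mu_{n,i}=n-i+(n-1)(n-2)/4$ and $$FM(r,s)(n,i)=\frac{1}{(n-1)!}\sum_{\pi\in S_n,\ \pi_n=i}(\mathrm{inv}(\pi)-\mu_{n,i})^{(r)}(\mathrm{maj}(\pi)-\mu_{n,i})^{(s)} .$$ *)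

From HB Require Import structures.
From mathcomp Require Import all_boot all_order all_algebra all_fingroup.
Set Implicit Arguments. Unset Strict Implicit. Unset Printing Implicit Defensive.
Import Order.TTheory GRing.Theory Num.Theory.

(* Permutations of {1..n} are modelled by 'S_n = {perm 'I_n}; position p
   (1-indexed) corresponds to the ordinal p-1, value v to ordinal v-1. *)

Definition inv_perm (n : nat) (s : 'S_n) : nat :=
  #|[set p : 'I_n * 'I_n | (p.1 < p.2)%N && (s p.2 < s p.1)%N]|.

Definition maj_perm (n : nat) (s : 'S_n) : nat :=
  \sum_(i < n) \sum_(j < n | (val j == (val i).+1) && (s j < s i)%N) (val i).+1.

Local Open Scope ring_scope.

Definition falling (z : rat) (k : nat) : rat := \prod_(j < k) (z - j%:R).

Definition mu (n i : nat) : rat :=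
  n%:R - i%:R + (n%:R - 1) * (n%:R - 2) / 4%:R.

(* FM(r,s)(n,i): sum over permutations with pi_n = i (1-indexed), i.e.
   the value at the last position (ordinal n-1) is the ordinal i-1. *)
Definition FM (r s n i : nat) : rat :=
  ((n.-1)`!%:R)^-1 *
  \sum_(p : 'S_n | [exists k : 'I_n, (val k == n.-1) && (val (p k) == i.-1)])
     falling ((inv_perm p)%:R - mu n i) r * falling ((maj_perm p)%:R - mu n i) s.

From HB Require Import structures.
From mathcomp Require Import all_boot all_order all_algebra all_fingroup zify ring.
Set Implicit Arguments. Unset Strict Implicit. Unset Printing Implicit Defensive.
Import Order.TTheory GRing.Theory Num.Theory.

(* Strip the last entry of a permutation of size n + 1: if its value is j
   (0-indexed), the remaining permutation u has inv = inv u + (n - j) and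
   maj = maj u + n [last value of u >= j].  Expanding binomially, the average
   G(n, j) of inv^a maj^b over the permutations ending in j differs from the
   full average A(n) by a polynomial combination of averages A of smaller
   total degree a + b and of tail sums over j of averages G of smaller degree,
   so by induction on a + b and Faulhaber's formula G - A is a polynomial in
   (n, j).  Since A(n + 1) is the
   average of G(n, 0), ..., G(n, n), the increment A(n + 1) - A(n) is
   (n + 1)^-1 times a polynomial in n vanishing at n = -1 (an empty sum), hence
   a polynomial, and so is A.  Finally the falling factorials in FM expand into
   powers of inv and maj with coefficients polynomial in mu(n, i), which makes
   FM a polynomial combination of the G's. *)

(** * Removing the last entry of a permutation *)

Definition last_geq n (s : 'S_n) (j : nat) : bool :=
  [exists k : 'I_n, (val k == n.-1) && (j <= s k)].

Lemma exists_ord_max m (P : pred 'I_m.+1) :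
  [exists k : 'I_m.+1, (val k == m) && P k] = P ord_max.
Proof.
apply/existsP/idP => [[k /andP[/eqP km]]|Pm]; last by exists ord_max; rewrite eqxx.
by rewrite (_ : ord_max = k) //; apply: val_inj.
Qed.

Lemma last_geqE n (s : 'S_n.+1) j : last_geq s j = (j <= s ord_max).
Proof. exact: (exists_ord_max (fun k => j <= s k)). Qed.

Lemma inv_perm_sum n (s : 'S_n) :
  inv_perm s = \sum_(u < n) \sum_(v < n) ((u < v) && (s v < s u)).
Proof.
rewrite /inv_perm -sum1_card pair_big /= big_mkcond /=.
by apply: eq_bigr => p _; rewrite inE; case: ifP.
Qed.

Lemma maj_perm_sum n (s : 'S_n) :
  maj_perm s = \sum_(u < n) \sum_(v < n) ((v == u.+1 :> nat) && (s v < s u)) * u.+1.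
Proof.
rewrite /maj_perm; apply: eq_bigr => u _; rewrite big_mkcond /=.
by apply: eq_bigr => v _; case: ifP; rewrite ?mul1n ?mul0n.
Qed.

Lemma sum_leq_ord n j : \sum_(k < n) (j <= k) = n - j.
Proof.
elim: n => [|n IHn]; first by rewrite big_ord0.
by rewrite big_ord_recr /= IHn; case: (leqP j n) => jn; lia.
Qed.

Lemma ltn_bump2 h i j : (bump h i < bump h j) = (i < j).
Proof. by rewrite !ltnNge leq_bump2. Qed.

Lemma ltn_bump h i : (h < bump h i) = (h <= i).
Proof. by rewrite /bump; case: leqP => hi; lia. Qed.

Lemma widen_ord_max n (k : 'I_n) : widen_ord (leqnSn n) k = lift ord_max k.
Proof. by apply: val_inj; rewrite /= /bump leqNgt ltn_ord. Qed.

Lemma inv_perm_lift_max n (j : 'I_n.+1) (s : 'S_n) :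
  inv_perm (lift_perm ord_max j s) = inv_perm s + (n - j).
Proof.
rewrite !inv_perm_sum big_ord_recr /= [X in _ + X]big1 ?addn0; last first.
  by move=> v _; rewrite ltnNge -ltnS ltn_ord.
rewrite -(sum_leq_ord n j) [X in _ = _ + X](reindex_inj (@perm_inj _ s)) -big_split /=.
apply: eq_bigr => u _; rewrite big_ord_recr /= widen_ord_max lift_perm_lift lift_perm_id.
rewrite /= ltn_ord ltn_bump; congr (_ + _); apply: eq_bigr => v _.
by rewrite widen_ord_max lift_perm_lift /= ltn_bump2.
Qed.

Lemma sum_last_descent n (s : 'S_n) j :
  \sum_(u < n) ((n == u.+1) && (j <= s u)) * u.+1 = last_geq s j * n.
Proof.
case: n s => [|m] s; first by rewrite big_ord0 muln0.
rewrite big_ord_recr /= eqxx big1 ?add0n ?last_geqE 1?mulnC // => u _.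
by rewrite eqSS eq_sym ltn_eqF.
Qed.

Lemma maj_perm_lift_max n (j : 'I_n.+1) (s : 'S_n) :
  maj_perm (lift_perm ord_max j s) = maj_perm s + last_geq s j * n.
Proof.
rewrite !maj_perm_sum big_ord_recr /= [X in _ + X]big1 ?addn0; last first.
  by move=> v _; rewrite ltn_eqF.
rewrite -sum_last_descent -big_split /=; apply: eq_bigr => u _.
rewrite big_ord_recr /= widen_ord_max lift_perm_lift lift_perm_id /= ltn_bump.
congr (_ + _); apply: eq_bigr => v _.
by rewrite widen_ord_max lift_perm_lift /= ltn_bump2.
Qed.

Lemma sum_perm_lift_max (R : nmodType) n (F : 'S_n.+1 -> R) :
  (\sum_(s : 'S_n.+1) F s = \sum_(j < n.+1) \sum_(u : 'S_n) F (lift_perm ord_max j u))%R.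
Proof.
have lift_inj : injective (fun p : 'I_n.+1 * 'S_n => lift_perm ord_max p.1 p.2).
  move=> [j u] [k v] /= /permP uv; have := uv ord_max; rewrite !lift_perm_id => jk.
  subst k; congr pair; apply/permP => i; apply: (@lift_inj _ j).
  by rewrite -!(lift_perm_lift ord_max) uv.
rewrite pair_big (reindex _ (onW_bij _ (inj_card_bij lift_inj _))) //.
by rewrite card_prod card_ord !card_Sn factS.
Qed.

Lemma sum_perm_by_last (R : nmodType) n (P : pred nat) (F : 'S_n.+1 -> R) :
  (\sum_(s : 'S_n.+1 | P (s ord_max)) F s =
   \sum_(k < n.+1 | P k) \sum_(s : 'S_n.+1 | val (s ord_max) == k) F s)%R.
Proof.
rewrite (partition_big (fun s : 'S_n.+1 => s ord_max) (fun k : 'I_n.+1 => P k)) //.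
apply: eq_bigr => k Pk; apply: eq_bigl => s; rewrite val_eqE andbC.
by case: eqP => // ->; rewrite Pk.
Qed.

Lemma sum_perm_last (R : nmodType) n (j : 'I_n.+1) (F : 'S_n.+1 -> R) :
  (\sum_(s : 'S_n.+1 | s ord_max == j) F s = \sum_(u : 'S_n) F (lift_perm ord_max j u))%R.
Proof.
rewrite big_mkcond sum_perm_lift_max (bigD1 j) //= [X in (_ + X)%R]big1 ?addr0 => [|k kj].
  by apply: eq_bigr => u _; rewrite lift_perm_id eqxx.
by apply: big1 => u _; rewrite lift_perm_id (negbTE kj).
Qed.

Local Open Scope ring_scope.

(** * Polynomial functions *)

Definition bipoly (f : rat -> rat -> rat) : Prop :=
  exists Q : {poly {poly rat}}, forall x y, f x y = Q.[y%:P].[x].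

Lemma bipoly_eq f g : f =2 g -> bipoly f -> bipoly g.
Proof. by move=> fg [Q fQ]; exists Q => x y; rewrite -fg. Qed.

Lemma bipoly_cst c : bipoly (fun _ _ => c).
Proof. by exists c%:P%:P => x y; rewrite !hornerC. Qed.

Lemma bipoly_x : bipoly (fun x _ => x).
Proof. by exists 'X%:P => x y; rewrite hornerC hornerX. Qed.

Lemma bipoly_y : bipoly (fun _ y => y).
Proof. by exists 'X => x y; rewrite hornerX hornerC. Qed.

Lemma bipolyD f g : bipoly f -> bipoly g -> bipoly (fun x y => f x y + g x y).
Proof. by move=> [P fP] [Q gQ]; exists (P + Q) => x y; rewrite !hornerD fP gQ. Qed.

Lemma bipolyB f g : bipoly f -> bipoly g -> bipoly (fun x y => f x y - g x y).
Proof.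
by move=> [P fP] [Q gQ]; exists (P - Q) => x y; rewrite !(hornerD, hornerN) fP gQ.
Qed.

Lemma bipolyM f g : bipoly f -> bipoly g -> bipoly (fun x y => f x y * g x y).
Proof. by move=> [P fP] [Q gQ]; exists (P * Q) => x y; rewrite !hornerM fP gQ. Qed.

Lemma bipolyX f k : bipoly f -> bipoly (fun x y => f x y ^+ k).
Proof. by move=> [Q fQ]; exists (Q ^+ k) => x y; rewrite !horner_exp fQ. Qed.

Lemma bipoly_sum (I : Type) (r : seq I) (F : I -> rat -> rat -> rat) :
  (forall i, bipoly (F i)) -> bipoly (fun x y => \sum_(i <- r) F i x y).
Proof.
move=> FP; elim: r => [|i r IHr].
  by apply: bipoly_eq (bipoly_cst 0) => x y; rewrite big_nil.
by apply: bipoly_eq (bipolyD (FP i) IHr) => x y; rewrite big_cons.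
Qed.

Lemma horner2_coef (Q : {poly {poly rat}}) x y :
  Q.[y%:P].[x] = \sum_(k < size Q) (Q`_k).[x] * y ^+ k.
Proof.
rewrite (horner_coef Q) horner_sum; apply: eq_bigr => k _.
by rewrite hornerM horner_exp !hornerC.
Qed.

Lemma bipoly_horner (P : {poly rat}) u : bipoly u -> bipoly (fun x y => P.[u x y]).
Proof.
move=> uP; apply: bipoly_eq (bipoly_sum _
  (fun i : 'I_(size P) => bipolyM (bipoly_cst P`_i) (bipolyX i uP))).
by move=> x y; rewrite [RHS]horner_coef.
Qed.

Lemma bipoly_comp f u v : bipoly f -> bipoly u -> bipoly v ->
  bipoly (fun x y => f (u x y) (v x y)).
Proof.
move=> [Q fQ] uP vP; apply: bipoly_eq (bipoly_sum _
  (fun k : 'I_(size Q) => bipolyM (bipoly_horner Q`_k uP) (bipolyX k vP))).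
by move=> x y; rewrite fQ horner2_coef.
Qed.

Lemma power_sum_binomial e m :
  (m%:R : rat) ^+ e.+1 = \sum_(t < e.+1) 'C(e.+1, t)%:R * \sum_(k < m) k%:R ^+ t.
Proof.
have succ_diff k : (k.+1%:R : rat) ^+ e.+1 - k%:R ^+ e.+1 =
    \sum_(t < e.+1) 'C(e.+1, t)%:R * k%:R ^+ t.
  rewrite -natr1 exprD1n big_ord_recr /= binn mulr1n addrK.
  by apply: eq_bigr => t _; rewrite mulr_natl.
have := telescope_sumr (fun k => k%:R ^+ e.+1 : rat) (leq0n m).
rewrite expr0n subr0 => <-; under eq_bigr do rewrite succ_diff.
by rewrite big_mkord exchange_big; apply: eq_bigr => t _; rewrite mulr_sumr.
Qed.

Lemma power_sum_poly N : exists P : nat -> {poly rat},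
  forall e m, (e < N)%N -> (P e).[m%:R] = \sum_(k < m) k%:R ^+ e.
Proof.
elim: N => [|N [P PE]]; first by exists (fun=> 0).
(* Solve [power_sum_binomial] for its top power sum. *)
pose PN := (N.+1%:R)^-1%:P * ('X ^+ N.+1 - \sum_(t < N) 'C(N.+1, t)%:R%:P * P t).
exists (fun e => if e == N then PN else P e) => e m; case: eqP => [-> _ | neN].
  rewrite hornerM hornerC hornerD hornerN horner_sum hornerXn.
  under eq_bigr => t _ do rewrite hornerM hornerC PE //.
  rewrite power_sum_binomial big_ord_recr /= addrC addrK binSn mulKf //.
  by rewrite pnatr_eq0.
by rewrite ltnS leq_eqVlt => /predU1P[//|]; exact: PE.
Qed.

Lemma bipoly_partial_sum f : bipoly f ->
  exists2 g, bipoly g & forall x m, g x m%:R = \sum_(k < m) f x k%:R.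
Proof.
move=> [Q fQ]; have [P PE] := power_sum_poly (size Q).
exists (fun x y => \sum_(e < size Q) (Q`_e).[x] * (P e).[y]).
  exact: bipoly_sum (fun e => bipolyM (bipoly_horner _ bipoly_x) (bipoly_horner _ bipoly_y)).
move=> x m; under [RHS]eq_bigr do rewrite fQ horner2_coef.
by rewrite exchange_big; apply: eq_bigr => e _; rewrite PE // mulr_sumr.
Qed.

Definition bipoly_on (D : rel nat) (F : nat -> nat -> rat) : Prop :=
  exists2 f, bipoly f & forall n j, D n j -> F n j = f n%:R j%:R.

Section BipolyOn.
Variable D : rel nat.

Lemma bipoly_onW f : bipoly f -> bipoly_on D (fun n j => f n%:R j%:R).
Proof. by exists f. Qed.

Lemma bipoly_on_eq F G : (forall n j, D n j -> F n j = G n j) ->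
  bipoly_on D F -> bipoly_on D G.
Proof. by move=> FG [f fP Ff]; exists f => // n j Dnj; rewrite -FG ?Ff. Qed.

Lemma bipoly_onD F G : bipoly_on D F -> bipoly_on D G ->
  bipoly_on D (fun n j => F n j + G n j).
Proof.
by move=> [f fP Ff] [g gP Gg]; exists (fun x y => f x y + g x y);
  [exact: bipolyD | move=> n j Dnj; rewrite Ff ?Gg].
Qed.

Lemma bipoly_onM F G : bipoly_on D F -> bipoly_on D G ->
  bipoly_on D (fun n j => F n j * G n j).
Proof.
by move=> [f fP Ff] [g gP Gg]; exists (fun x y => f x y * g x y);
  [exact: bipolyM | move=> n j Dnj; rewrite Ff ?Gg].
Qed.

Lemma bipoly_on_sum (I : Type) (r : seq I) (F : I -> nat -> nat -> rat) :
  (forall i, bipoly_on D (F i)) -> bipoly_on D (fun n j => \sum_(i <- r) F i n j).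
Proof.
move=> FP; elim: r => [|i r IHr].
  by apply: bipoly_on_eq (bipoly_onW (bipoly_cst 0)) => n j _; rewrite big_nil.
by apply: bipoly_on_eq (bipoly_onD (FP i) IHr) => n j _; rewrite big_cons.
Qed.

End BipolyOn.

Arguments bipoly_onW {D f}.

Lemma bipoly_at0 f : bipoly f -> exists P : {poly rat}, forall x, f x 0 = P.[x].
Proof. by move=> [Q fQ]; exists Q.[0] => x; rewrite fQ polyC0. Qed.

Lemma bipoly_on_tail_sum Z : bipoly_on geq Z ->
  bipoly_on geq (fun n j => \sum_(j <= k < n) Z n.-1 k).
Proof.
move=> [z zP Zz]; have [s sP sE] := bipoly_partial_sum zP.
have predP := bipolyB bipoly_x (bipoly_cst 1).
exists (fun x y => s (x - 1) x - s (x - 1) y).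
  exact: bipolyB (bipoly_comp sP predP bipoly_x) (bipoly_comp sP predP bipoly_y).
move=> n j /= jn; rewrite !sE -!(big_mkord xpredT (fun k => z (n%:R - 1) k%:R)).
rewrite (big_cat_nat (leq0n j) jn) /= addrC addrK.
apply: eq_big_nat => k /andP[_ kn]; rewrite Zz; last by rewrite /= -ltnS (ltn_predK kn).
by rewrite -(ltn_predK kn) -natr1 addrK.
Qed.

Lemma poly_of_average_recursion (A : nat -> rat) (G : nat -> nat -> rat) :
  (forall n, A n.+1 = (n.+1%:R)^-1 * \sum_(k < n.+1) G n k) ->
  bipoly_on geq (fun n k => G n k - A n) ->
  exists P : {poly rat}, forall n, A n = P.[n%:R].
Proof.
move=> Asucc [z zP Zz]; have [s sP sE] := bipoly_partial_sum zP.
have [S SE] := bipoly_at0 (bipoly_comp sP bipoly_x (bipolyD bipoly_x (bipoly_cst 1))).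
(* S.[x] = \sum_(k < x + 1) (G - A)(x, k) is an empty sum at x = -1. *)
have /factor_theorem[V SV] : root S (-1).
  by rewrite /root -SE addNr (sE (-1) 0) big_ord0.
have Adiff n : A n.+1 = A n + V.[n%:R].
  have n1_neq0 : (n.+1%:R : rat) != 0 by rewrite pnatr_eq0.
  have VE : V.[n%:R] * n.+1%:R = \sum_(k < n.+1) (G n k - A n).
    rewrite -natr1 -[1]opprK -hornerXsubC -hornerM -SV -SE natr1 sE.
    by apply: eq_bigr => k _; rewrite Zz //= -ltnS.
  rewrite Asucc -[\sum_(k < _) G n k](subrK (\sum_(k < n.+1) A n)) -sumrB -VE.
  by rewrite sumr_const card_ord -[A n *+ _]mulr_natr -mulrDl mulrC mulfK // addrC.
have [t tP tE] := bipoly_partial_sum (bipoly_horner V bipoly_y).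
have [P PE] := bipoly_at0 (bipolyD (bipoly_cst (A 0)) (bipoly_comp tP bipoly_y bipoly_x)).
exists P => n; rewrite -PE tE; elim: n => [|n IHn]; first by rewrite big_ord0 addr0.
by rewrite Adiff IHn big_ord_recr addrA.
Qed.

(** * Moments of inv and maj *)

Definition inv_maj_pow a b n (s : 'S_n) : rat :=
  (inv_perm s)%:R ^+ a * (maj_perm s)%:R ^+ b.

Definition moment a b n : rat := (n`!%:R)^-1 * \sum_(s : 'S_n) inv_maj_pow a b s.

Definition last_moment a b n j : rat :=
  (n`!%:R)^-1 * \sum_(s : 'S_n.+1 | val (s ord_max) == j) inv_maj_pow a b s.

Definition tail_moment a b n j : rat := \sum_(j <= k < n) last_moment a b n.-1 k.

Definition shifted_moment a b n j : rat :=
  (n`!%:R)^-1 * \sum_(s : 'S_n) (inv_perm s)%:R ^+ a * (maj_perm s + last_geq s j * n)%:R ^+ b.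

Lemma fact_succ_inv n : ((n.+1)`!%:R : rat)^-1 * n.+1%:R = (n`!%:R)^-1.
Proof. by rewrite factS natrM invfM mulrAC mulVf ?mul1r // pnatr_eq0. Qed.

Lemma moment_succ a b n :
  moment a b n.+1 = (n.+1%:R)^-1 * \sum_(k < n.+1) last_moment a b n k.
Proof.
rewrite /moment (sum_perm_by_last xpredT) mulr_sumr mulr_sumr; apply: eq_bigr => k _.
by rewrite mulrA -invfM -natrM -factS.
Qed.

Lemma tail_momentE a b n j :
  tail_moment a b n j = (n`!%:R)^-1 * n%:R * \sum_(s : 'S_n | last_geq s j) inv_maj_pow a b s.
Proof.
case: n => [|m]; first by rewrite mulr0 mul0r /tail_moment big_geq.
rewrite fact_succ_inv /tail_moment big_geq_mkord.
rewrite (eq_bigl (fun s : 'S_m.+1 => j <= s ord_max)%N) => [|s]; last by rewrite last_geqE.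
by rewrite (sum_perm_by_last (leq j)) mulr_sumr.
Qed.

Lemma last_momentE a b n j : (j <= n)%N ->
  last_moment a b n j = (n`!%:R)^-1 * \sum_(u : 'S_n)
    ((n%:R - j%:R) + (inv_perm u)%:R) ^+ a * (maj_perm u + last_geq u j * n)%:R ^+ b.
Proof.
rewrite -ltnS => jn; rewrite /last_moment.
rewrite (eq_bigl (fun s : 'S_n.+1 => s ord_max == Ordinal jn)) => [|s]; last first.
  by rewrite -val_eqE.
rewrite sum_perm_last; congr (_ * _); apply: eq_bigr => u _.
by rewrite /inv_maj_pow inv_perm_lift_max maj_perm_lift_max natrD natrB // addrC.
Qed.

Lemma last_moment_binomial a b n j : (j <= n)%N ->
  last_moment a b n j =
  \sum_(i < a.+1) 'C(a, i)%:R * (n%:R - j%:R) ^+ (a - i) * shifted_moment i b n j.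
Proof.
move=> jn; rewrite last_momentE //.
under eq_bigr => u _ do rewrite exprDn mulr_suml.
rewrite exchange_big mulr_sumr; apply: eq_bigr => i _.
rewrite mulrCA !mulr_sumr; apply: eq_bigr => u _.
by rewrite -mulr_natl; ring.
Qed.

Lemma shifted_moment_binomial a b n j :
  shifted_moment a b n j =
  moment a b n + \sum_(t < b) 'C(b, t)%:R * n%:R ^+ (b - t.+1) * tail_moment a t n j.
Proof.
rewrite /shifted_moment.
under eq_bigr => s _ do rewrite natrD addrC exprDn big_ord_recr /= subnn expr0 mul1r.
under eq_bigr => s _ do rewrite binn mulr1n mulrDr.
rewrite big_split /= mulrDr addrC; congr (_ + _).
under eq_bigr => s _ do rewrite mulr_sumr.
rewrite exchange_big mulr_sumr.
apply: eq_bigr => t _; rewrite tail_momentE (bigID (fun s => last_geq s j)) /=.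
rewrite [X in _ + X]big1 ?addr0 => [|s /negbTE->]; last first.
  by rewrite /= mul0n expr0n subn_eq0 leqNgt ltn_ord /= !(mul0r, mulr0, mul0rn).
rewrite !mulr_sumr; apply: eq_bigr => s ->.
by rewrite mul1n -(subnSK (ltn_ord t)) -[_ *+ 'C(b, t)]mulr_natl exprS /inv_maj_pow; ring.
Qed.

Definition moments_poly a b : Prop :=
  (exists P : {poly rat}, forall n, moment a b n = P.[n%:R]) /\
  bipoly_on geq (last_moment a b).

Lemma bipoly_on_horner {D : rel nat} (A : nat -> rat) (P : {poly rat}) :
  (forall n, A n = P.[n%:R]) -> bipoly_on D (fun n _ => A n).
Proof.
by move=> AP; exists (fun x _ => P.[x]) => [|n j _]; [exact: bipoly_horner bipoly_x|].
Qed.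

Section MomentsStep.
Variables a b : nat.
Hypothesis IH : forall a' b', (a' + b' < a + b)%N -> moments_poly a' b'.

Lemma tail_moment_poly a' t : (a' + t < a + b)%N -> bipoly_on geq (tail_moment a' t).
Proof. by move=> lt; apply: bipoly_on_tail_sum; exact: (IH lt).2. Qed.

Lemma shifted_excess_poly a' : (a' <= a)%N ->
  bipoly_on geq (fun n j => shifted_moment a' b n j - moment a' b n).
Proof.
move=> le_a; have tailP (t : 'I_b) : bipoly_on geq (tail_moment a' t).
  by apply: tail_moment_poly; have := ltn_ord t; lia.
apply: bipoly_on_eq (bipoly_on_sum _ (fun t : 'I_b =>
  bipoly_onM (bipoly_onW (bipolyM (bipoly_cst _) (bipolyX _ bipoly_x))) (tailP t))).
by move=> n j _; rewrite shifted_moment_binomial addrAC subrr add0r.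
Qed.

Lemma shifted_moment_poly a' : (a' < a)%N -> bipoly_on geq (shifted_moment a' b).
Proof.
move=> lt_a; have [[P PE] _] : moments_poly a' b by apply: IH; rewrite ltn_add2r.
apply: bipoly_on_eq (bipoly_onD (bipoly_on_horner PE) (shifted_excess_poly (ltnW lt_a))).
by move=> n j _; rewrite addrC subrK.
Qed.

Lemma last_excess_poly : bipoly_on geq (fun n j => last_moment a b n j - moment a b n).
Proof.
apply: bipoly_on_eq (bipoly_onD (bipoly_on_sum _ (fun i : 'I_a =>
    bipoly_onM (bipoly_onW (bipolyM (bipoly_cst _) (bipolyX _ (bipolyB bipoly_x bipoly_y))))
               (shifted_moment_poly (ltn_ord i)))) (shifted_excess_poly (leqnn a))).
move=> n j jn; rewrite last_moment_binomial // big_ord_recr /=.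
by rewrite subnn binn expr0 mulr1 mul1r addrA.
Qed.

Lemma moments_poly_step : moments_poly a b.
Proof.
have [P PE] := poly_of_average_recursion (moment_succ a b) last_excess_poly.
split; first by exists P.
apply: bipoly_on_eq (bipoly_onD (bipoly_on_horner PE) last_excess_poly).
by move=> n j _; rewrite addrC subrK.
Qed.

End MomentsStep.

Lemma moments_polynomial a b : moments_poly a b.
Proof.
have [d] := ubnP (a + b); elim: d a b => // d IHd a b abd.
by apply: moments_poly_step => a' b' lt; apply: IHd; lia.
Qed.

(** * Factorial moments *)

Definition falling_poly (r : nat) : {poly {poly rat}} :=
  \prod_(k < r) ('X - ('X + k%:R%:P)%:P).

Lemma falling_polyE r c z : falling (z - c) r = (falling_poly r).[z%:P].[c].
Proof.
rewrite /falling /falling_poly !horner_prod; apply: eq_bigr => k _.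
by rewrite hornerXsubC !hornerE opprD addrA.
Qed.

Lemma bipoly_mu : bipoly (fun x y => x - y + (x - 1) * (x - 2) / 4%:R).
Proof.
apply: bipolyD (bipolyB bipoly_x bipoly_y) (bipolyM (bipolyM _ _) (bipoly_cst _)).
  exact: bipolyB bipoly_x (bipoly_cst 1).
exact: bipolyB bipoly_x (bipoly_cst 2).
Qed.

Lemma FM_expansion r s n i : (0 < n)%N ->
  FM r s n i = \sum_(a < size (falling_poly r)) \sum_(b < size (falling_poly s))
    ((falling_poly r)`_a).[mu n i] * ((falling_poly s)`_b).[mu n i] *
    last_moment a b n.-1 i.-1.
Proof.
case: n => [|m] // _.
rewrite /FM (eq_bigl (fun p : 'S_m.+1 => val (p ord_max) == i.-1)) => [|p]; last first.
  exact: (exists_ord_max (fun k => val (p k) == i.-1)).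
under eq_bigr => p _ do rewrite !falling_polyE !horner2_coef big_distrlr /=.
rewrite exchange_big mulr_sumr; apply: eq_bigr => a _.
rewrite exchange_big mulr_sumr; apply: eq_bigr => b _.
rewrite /last_moment mulrCA !mulr_sumr; apply: eq_bigr => p _.
by rewrite /inv_maj_pow; ring.
Qed.

Lemma bipoly_on_predn F : bipoly_on geq F ->
  bipoly_on (fun n i => 0 < i <= n)%N (fun n i => F n.-1 i.-1).
Proof.
move=> [f fP Ff]; have predP := bipolyB bipoly_x (bipoly_cst 1).
exists (fun x y => f (x - 1) (y - 1)) => [|[|m] [|j] //= jm].
  exact: bipoly_comp fP predP (bipolyB bipoly_y (bipoly_cst 1)).
by rewrite Ff // -!natr1 !addrK.
Qed.

Lemma FM_poly r s : bipoly_on (fun n i => 0 < i <= n)%N (FM r s).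
Proof.
have coefP (P : {poly rat}) : bipoly_on (fun n i => 0 < i <= n)%N (fun n i => P.[mu n i]).
  exact: bipoly_onW (bipoly_horner P bipoly_mu).
apply: bipoly_on_eq (bipoly_on_sum _ (fun a : 'I_(size (falling_poly r)) =>
  bipoly_on_sum _ (fun b : 'I_(size (falling_poly s)) =>
  bipoly_onM (bipoly_onM (coefP _) (coefP _)) (bipoly_on_predn (moments_polynomial a b).2)))).
by move=> n i /andP[i_gt0 le_in]; rewrite FM_expansion //; exact: leq_trans i_gt0 le_in.
Qed.

Theorem mainTheorem6 (r s : nat) :
  (exists P : {poly rat}, forall n : nat, (1 <= n)%N ->
     ((n`!)%:R)^-1 * (\sum_(p : 'S_n) ((inv_perm p) ^ r * (maj_perm p) ^ s)%N%:R)
       = P.[n%:R])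
  /\
  (exists Q : {poly {poly rat}}, forall n i : nat, (1 <= i)%N -> (i <= n)%N ->
     FM r s n i = Q.[(i%:R)%:P].[n%:R]).
Proof.
split.
  have [[P PE] _] := moments_polynomial r s.
  exists P => n _; rewrite -PE /moment; congr (_ * _); apply: eq_bigr => p _.
  by rewrite natrM !natrX.
have [f [Q fQ] Ff] := FM_poly r s.
by exists Q => n i i1 iN; rewrite Ff ?i1 ?iN.
Qed.
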